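(* Let $y,l,u\in\mathcal{R}(\mathbb{R}^{+},\mathbb{R})$ be such that $l\leq u$ and $l_0\leq y_0\leq u_0$. Let $(\xi,\kappa)$ be the solution of $RP_l(y)$. Then for all $t\geq0$, $$\alpha^{l}(y)_t\vee\beta^{u}_{l}(y)_t=\alpha^{l}(y)_t+\Theta^u_l(\xi)_t.$$
   Context: A function $f:\mathbb{R}^+=[0,\infty)\to\mathbb{R}$ is regulated if it has a left limit $f_{t^-}$ at every $t>0$ and a right limit $f_{t^+}$ at every $t\geq0$; $\mathcal{R}(\mathbb{R}^{+},\mathbb{R})$ is the set of regulated functions. $a\wedge b=\min(a,b)$, $a\vee b=\max(a,b)$, $a^+=a\vee0$. Maps: $\alpha^{l}(y)_t=\inf_{s\leq t}\big((y_s-l_s)\wedge(y_{s^+}-l_{s^+})\wedge 0\big)$; $\beta^{u}_{l}(y)_t=\sup_{s\leq t}\Big(\big((y_s-u_s)\vee(y_{s^+}-u_{s^+})\big)\wedge\inf_{s\leq r\leq t}\big[\big((y_r-l_r)\wedge(y_{r^+}-l_{r^+})\big)\vee(y_r-u_r)\big]\Big)$; $\Theta^{u}_{l}(f)_t=\sup_{s\leq t}\Big(\big((f_s-u_s)\vee(f_{s^+}-u_{s^+})\big)^+\wedge\inf_{s\leq r\leq t}\big[\big((f_r-l_r)\wedge(f_{r^+}-l_{r^+})\big)\vee(f_r-u_r)\big]\Big)$. One-barrier problem $RP_l(y)$ (for $y,l$ regulated with $y_0\geq l_0$): the unique pair $(\xi,\kappa)$ with $\xi=y+\kappa\geq l$,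 $\kappa$ non-decreasing, right-continuous, $\kappa_0=0$, and $\int_{[0,\infty[}(\xi_s-l_s)\wedge(\xi_{s^+}-l_{s^+})\,d\kappa_s=0$; explicitly $\kappa=-\alpha^l(y)$. *)

(* Functions on R^+ = [0,oo) are
   represented as functions R -> R whose values at negative arguments are
   irrelevant. *)
From HB Require Import structures.
From mathcomp Require Import all_boot all_order all_algebra.
From mathcomp Require Import all_classical all_reals all_analysis.
Set Implicit Arguments. Unset Strict Implicit. Unset Printing Implicit Defensive.
Import Order.TTheory GRing.Theory Num.Theory.
Import numFieldNormedType.Exports.
Local Open Scope classical_set_scope.
Local Open Scope ring_scope.

Section Defs.
Variable R : realType.

Definition regulated (f : R -> R) : Prop :=
  (forall t : R, 0 < t -> cvg (f x @[x --> t^'-])) /\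
  (forall t : R, 0 <= t -> cvg (f x @[x --> t^'+])).

Definition rlim (f : R -> R) (t : R) : R := lim (f x @[x --> t^'+]).

Definition alpha (l y : R -> R) (t : R) : R :=
  inf [set Num.min (Num.min (y s - l s) (rlim y s - rlim l s)) 0
      | s in [set s | 0 <= s <= t]].

Definition inner_inf (u l f : R -> R) (s t : R) : R :=
  inf [set Num.max (Num.min (f r - l r) (rlim f r - rlim l r)) (f r - u r)
      | r in [set r | s <= r <= t]].

Definition beta (u l y : R -> R) (t : R) : R :=
  sup [set Num.min (Num.max (y s - u s) (rlim y s - rlim u s))
                   (inner_inf u l y s t)
      | s in [set s | 0 <= s <= t]].

Definition Theta (u l f : R -> R) (t : R) : R :=
  sup [set Num.min (Num.max (Num.max (f s - u s) (rlim f s - rlim u s)) 0)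
                   (inner_inf u l f s t)
      | s in [set s | 0 <= s <= t]].

Definition ext0 (k : R -> R) (x : R) : R := if x < 0 then k 0 else k x.

(* (xi, kappa) solves the one-barrier reflection problem RP_l(y):
   xi = y + kappa >= l, kappa non-decreasing, right-continuous, kappa_0 = 0,
   and int_{[0,oo[} (xi_s - l_s) /\ (xi_{s+} - l_{s+}) dkappa_s = 0, the
   integral being against the Lebesgue-Stieltjes measure of kappa
   (extended by kappa_0 = 0 to the negative half-line). *)
Definition RP_sol (l y xi kappa : R -> R) : Prop :=
  (forall t, 0 <= t -> xi t = y t + kappa t) /\
  (forall t, 0 <= t -> l t <= xi t) /\
  (forall s t, 0 <= s <= t -> kappa s <= kappa t) /\
  (forall t, 0 <= t -> kappa x @[x --> t^'+] --> kappa t) /\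
  kappa 0 = 0 /\
  (exists k : cumulative R R, (forall x, k x = ext0 kappa x) /\
        (\int[lebesgue_stieltjes_measure k]_(s in [set s : R | (0 <= s)%R])
           (Num.min (xi s - l s) (rlim xi s - rlim l s))%R%:E = 0)%E).

End Defs.

(* Since xi = y + kappa with kappa right-continuous, every ingredient of Theta^u_l(xi) is the
   corresponding ingredient for y shifted by kappa. The complementarity condition of RP_l(y)
   forces alpha^l(y)_t = -kappa_t: were kappa_t larger, then on [a, t], a being the first time
   kappa reaches a level above -alpha^l(y)_t, the integrand (xi - l) /\ (xi_+ - l_+) would be
   bounded away from 0 while dkappa charges [a, t]. The claim thus reduces to
   Theta^u_l(xi)_t = max(0, beta^u_l(y)_t + kappa_t), an identity between sup-inf expressions
   under a nondecreasing shift k with inf_{s <= t} (D_s /\ 0) = -k_t: in the supremum defining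
   beta, a time s at which k_s is still far below k_t is dominated by a later time r at which
   D_r is close to -k_t. Regulated functions are bounded on compact intervals, which keeps all
   these suprema and infima finite. *)

From HB Require Import structures.
From mathcomp Require Import all_boot all_order all_algebra.
From mathcomp Require Import all_classical all_reals all_analysis.
From mathcomp Require Import ring lra.
Set Implicit Arguments. Unset Strict Implicit. Unset Printing Implicit Defensive.
Import Order.TTheory GRing.Theory Num.Theory.
Import numFieldNormedType.Exports.
Local Open Scope classical_set_scope.
Local Open Scope ring_scope.

Section regulated_bounded.
Variable R : realType.

Lemma regulated_near_bounded (f : R -> R) (x : R) :
  regulated f -> 0 <= x ->
  exists M, \forall z \near x, 0 <= z -> `|f z| <= M.
Proof.
move=> [fl fr] x0.
have [Mr fMr] := (@ex_bound _ _ _ f x^'+ _).1 (cvg_bounded _ _ (fr x x0)).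
have {}fMr : \forall z \near x, x < z -> `|f z| <= Mr := fMr.
have [Ml fMl] : exists Ml, \forall z \near x, z < x -> 0 <= z -> `|f z| <= Ml.
  have [->|x_neq0] := eqVneq x 0.
    by exists 0; near=> z => z0 /(lt_le_trans z0); rewrite ltxx.
  have xgt0 : 0 < x by rewrite lt_neqAle eq_sym x_neq0.
  have [Ml fMl] := (@ex_bound _ _ _ f x^'- _).1 (cvg_bounded _ _ (fl x xgt0)).
  have {}fMl : \forall z \near x, z < x -> `|f z| <= Ml := fMl.
  by exists Ml; apply: filterS fMl => z + zx _; apply.
exists (Num.max (Num.max Ml Mr) `|f x|); apply: filterS2 fMl fMr => z fl' fr' z0.
rewrite !le_max; have [zx|xz|<-] := ltgtP z x; last by rewrite lexx !orbT.
- by rewrite fl'.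
- by rewrite fr' ?orbT.
Unshelve. all: by end_near.
Qed.

Lemma regulated_bounded (f : R -> R) (T : R) : regulated f ->
  exists M, forall z, 0 <= z <= T -> `|f z| <= M.
Proof.
move=> freg.
have cover : \forall M \near +oo, `[0, T] `<=` [set z | `|f z| <= M].
  have cpt := (compact_near_coveringP _).1 (@segment_compact R 0 T).
  have := (near_covering_withinP _).2 cpt; apply=> x.
  rewrite /= in_itv /= => /andP[x0 _].
  have [M0 fM0] := regulated_near_bounded freg x0.
  near=> z M; rewrite /= in_itv /= => /andP[z0 _].
  apply: (@le_trans _ _ M0); first by move: z0; near: z.
  by near: M; apply: nbhs_pinfty_ge; exact: num_real.
have [M [_ fM]] := cover; exists (M + 1) => z zT.
by apply: (fM (M + 1)); [rewrite ltrDl | rewrite /= in_itv].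
Unshelve. all: by end_near.
Qed.

End regulated_bounded.

Lemma integral_ge_mul_measure (R : realType) d (T : measurableType d)
    (mu : {measure set T -> \bar R}) (D A : set T) (f : T -> R) (e : R) :
  measurable A -> A `<=` D -> 0 <= e ->
  (forall x, D x -> 0 <= f x) -> (forall x, A x -> e <= f x) ->
  (e%:E * mu A <= \int[mu]_(x in D) (f x)%:E)%E.
Proof.
move=> mA AD e0 f0 fA.
rewrite ge0_integralE; last by move=> x /f0; rewrite lee_fin.
apply: ereal_sup_ubound; exists (scale_nnsfun (indic_nnsfun R mA) e0).
  move=> x; rewrite /patch /= /measurable_realfun.mindic indicE.
  case: ifPn => [/set_mem Dx|Dx].
    by have [/set_mem/fA|_] := boolP (x \in A); rewrite ?mulr1 ?mulr0 lee_fin ?f0.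
  by rewrite memNset ?mulr0 // => /AD /mem_set; apply/negP.
by rewrite sintegralrM sintegral_indic.
Qed.

Section lebesgue_stieltjes.
Variables (R : realType) (k : cumulative R R).
Local Notation mu := (lebesgue_stieltjes_measure k).

Lemma lebesgue_stieltjes_measure_itvoc (a b : R) : a <= b ->
  mu (`]a, b]%classic : set (measurableTypeR R)) = (k b - k a)%:E.
Proof.
move=> ab; rewrite /lebesgue_stieltjes_measure /measure_extension /=.
rewrite measurable_mu_extE; last exact: is_ocitv.
exact: wlength_itv_bnd.
Qed.

Lemma lebesgue_stieltjes_measure_itvcc_ge (a b v : R) : a <= b ->
  (forall c, c < a -> k c <= v) -> ((k b - v)%:E <= mu `[a, b]%classic)%E.
Proof.
move=> ab kv.
pose F n : set (measurableTypeR R) := `]a - n.+1%:R^-1, b]%classic.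
have Fab n : a - n.+1%:R^-1 <= b by rewrite (le_trans _ ab) // gerBl.
have Fcap : \bigcap_n F n = `[a, b]%classic.
  apply/seteqP; split => x /=; rewrite in_itv /=.
    move=> Fx; have Fnx n : a - n.+1%:R^-1 < x <= b by have := Fx n I; rewrite /F /= in_itv.
    rewrite (andP (Fnx 0%N)).2 andbT leNgt; apply/negP => /ltr_add_invr[n].
    by rewrite -ltrBrDr => /(lt_trans (andP (Fnx n)).1); rewrite ltxx.
  move=> /andP[ax xb] n _; rewrite /F /= in_itv /= xb andbT.
  by rewrite (lt_le_trans _ ax) // gtrBl.
have Fdecr : nonincreasing_seq F.
  move=> n m nm; apply/subsetPset => x; rewrite /F /= !in_itv /= => /andP[+ ->].
  rewrite andbT; apply: le_lt_trans; rewrite lerD2l lerN2.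
  by rewrite lef_pV2 ?posrE // ler_nat.
have muF0 : (mu (F 0%N) < +oo)%E.
  by rewrite /F lebesgue_stieltjes_measure_itvoc // ltry.
have mF n : measurable (F n) by exact: measurable_itv.
have mFcap : measurable (\bigcap_n F n) by rewrite Fcap; exact: measurable_itv.
have := nonincreasing_cvg_mu muF0 mF mFcap Fdecr; rewrite Fcap => muF.
apply: (cvge_to_ge muF); apply: nearW => n /=.
rewrite /F lebesgue_stieltjes_measure_itvoc // lee_fin lerD2l lerN2 kv //.
by rewrite gtrBl invr_gt0.
Qed.
End lebesgue_stieltjes.

Lemma first_passage (R : realType) (k : R -> R) (t v : R) : 0 <= t ->
  (forall s r, 0 <= s <= r -> k s <= k r) ->
  (forall r, 0 <= r -> k x @[x --> r^'+] --> k r) -> v <= k t ->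
  exists a, [/\ 0 <= a <= t, v <= k a & forall r, 0 <= r -> r < a -> k r < v].
Proof.
move=> t0 kmono krc vkt.
pose B := [set r | 0 <= r <= t /\ v <= k r].
have Bt : B t by rewrite /B /= lexx t0.
have Blb : has_lbound B by exists 0 => r [/andP[]].
have a0 : 0 <= inf B by apply: lb_le_inf; [exists t | move=> r [/andP[]]].
exists (inf B); split.
- by rewrite a0 ge_inf.
- apply: (cvgr_to_ge (krc _ a0)); near=> w.
  have aw : inf B < w by near: w; exact: nbhs_right_gt.
  have [r [/andP[r0 _] vkr] rw] := inf_lt (ex_intro _ t Bt) aw.
  by apply: (le_trans vkr); apply: kmono; rewrite r0 ltW.
- move=> r r0 ra; rewrite ltNge; apply/negP => vkr.
  suff : inf B <= r by rewrite leNgt ra.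
  by apply: ge_inf => //; split => //; rewrite r0 (le_trans (ltW ra)) // ge_inf.
Unshelve. all: by end_near.
Qed.

Section image_sup_inf.
Variables (R : realType) (T : Type) (A : set T) (f : T -> R).

Lemma inf_image_le m x :
  (forall z, A z -> m <= f z) -> A x -> inf [set f z | z in A] <= f x.
Proof. by move=> mf Ax; apply: ge_inf; [exists m => _ [z Az <-]; exact: mf | exists x]. Qed.

Lemma le_inf_image m x :
  A x -> (forall z, A z -> m <= f z) -> m <= inf [set f z | z in A].
Proof.
by move=> Ax mf; apply: lb_le_inf; [exists (f x), x | move=> _ [z Az <-]; exact: mf].
Qed.

Lemma sup_image_ge M x :
  (forall z, A z -> f z <= M) -> A x -> f x <= sup [set f z | z in A].
Proof.
by move=> fM Ax; apply: ub_le_sup; [exists M => _ [z Az <-]; exact: fM | exists x].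
Qed.

Lemma sup_image_le M x :
  A x -> (forall z, A z -> f z <= M) -> sup [set f z | z in A] <= M.
Proof.
by move=> Ax fM; apply: ge_sup; [exists (f x), x | move=> _ [z Az <-]; exact: fM].
Qed.

End image_sup_inf.

(* Applied below with D = gap l y, E = y - u, P = (y - u) \/ (y_+ - u_+) and k = kappa. *)
Section sup_inf_shift.
Variables (R : realType) (t : R) (k D E P : R -> R).
Hypothesis t0 : 0 <= t.
Hypothesis k_mono : forall s r, 0 <= s <= r -> k s <= k r.
Hypothesis k0 : 0 <= k 0.
Hypothesis Dk_ge0 : forall r, 0 <= r <= t -> 0 <= D r + k r.
Hypothesis inf_D : inf [set Num.min (D s) 0 | s in [set s | 0 <= s <= t]] = - k t.
Hypothesis E_le_P : forall r, 0 <= r <= t -> E r <= P r.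
Variable M : R.
Hypothesis Q_le : forall r, 0 <= r <= t -> Num.max (D r) (E r) <= M.

Let I s := [set r | s <= r <= t].
Let Q r := Num.max (D r) (E r).
Let J s := inf [set Q r | r in I s].
Let Jk s := inf [set Q r + k r | r in I s].

Let k_le_kt r : 0 <= r <= t -> k r <= k t.
Proof. exact: k_mono. Qed.

Let Q_ge r : 0 <= r <= t -> - k t <= Q r.
Proof.
move=> rt; have := Dk_ge0 rt; have := k_le_kt rt.
by rewrite le_max => krt Dkr; apply/orP; left; lra.
Qed.

Let I_ge0 s r : 0 <= s -> I s r -> 0 <= r <= t.
Proof. by move=> s0 /andP[sr ->]; rewrite (le_trans s0 sr). Qed.

Let J_le s r : 0 <= s -> s <= r <= t -> J s <= Q r.
Proof.
move=> s0 sr; apply: (inf_image_le (f := Q) (m := - k t)) sr => z /(I_ge0 s0).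
exact: Q_ge.
Qed.

Let Qk_ge0 r : 0 <= r <= t -> 0 <= Q r + k r.
Proof. by move=> rt; apply: (le_trans (Dk_ge0 rt)); rewrite lerD2r le_max lexx. Qed.

Let Jk_le s r : 0 <= s -> s <= r <= t -> Jk s <= Q r + k r.
Proof.
move=> s0 sr; apply: (inf_image_le (f := fun r => Q r + k r) (m := 0)) sr.
by move=> z /(I_ge0 s0); exact: Qk_ge0.
Qed.

Let Jk_ge0 s : 0 <= s <= t -> 0 <= Jk s.
Proof.
move=> /andP[s0 st]; apply: (le_inf_image (f := fun r => Q r + k r) (x := s)).
  by rewrite /I /= lexx.
by move=> z /(I_ge0 s0); exact: Qk_ge0.
Qed.

Let J_add_le_Jk s r : 0 <= s -> s <= r <= t -> J s + k r <= Jk r.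
Proof.
move=> s0 /andP[sr rt]; apply: (le_inf_image (f := fun r => Q r + k r) (x := r)).
  by rewrite /I /= lexx.
move=> z /andP[rz zt]; apply: lerD; first by apply: J_le; rewrite ?(le_trans sr rz).
by apply: k_mono; rewrite (le_trans s0 sr).
Qed.

Let Jk_le_J_add s : 0 <= s <= t -> Jk s <= J s + k t.
Proof.
move=> /andP[s0 st]; rewrite -lerBlDr.
apply: (le_inf_image (f := Q) (x := s)); first by rewrite /I /= lexx.
move=> z sz; have zt := I_ge0 s0 sz; rewrite lerBlDr.
by apply: (le_trans (Jk_le s0 sz)); rewrite lerD2l k_le_kt.
Qed.

Let J_le_M s : 0 <= s <= t -> J s <= M.
Proof.
move=> st; have /andP[s0 s_le_t] := st.
by apply: le_trans (Q_le st); apply: J_le s0 _; rewrite lexx.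
Qed.

Let beta' := sup [set Num.min (P s) (J s) | s in I 0].
Let Theta' := sup [set Num.min (Num.max (P s + k s) 0) (Jk s) | s in I 0].

Let le_beta' s : 0 <= s <= t -> Num.min (P s) (J s) <= beta'.
Proof.
apply: (sup_image_ge (f := fun s => Num.min (P s) (J s)) (M := M)) => z zt.
by rewrite ge_min J_le_M ?orbT.
Qed.

Let le_Theta' s : 0 <= s <= t -> Num.min (Num.max (P s + k s) 0) (Jk s) <= Theta'.
Proof.
apply: (sup_image_ge (f := fun s => Num.min (Num.max (P s + k s) 0) (Jk s)) (M := M + k t)).
move=> z zt; rewrite ge_min (le_trans (Jk_le_J_add zt)) ?orbT //.
by rewrite lerD2r J_le_M.
Qed.

Let Theta'_ge0 : 0 <= Theta'.
Proof.
have t00 : 0 <= (0 : R) <= t by rewrite lexx t0.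
by apply: le_trans (le_Theta' t00); rewrite le_min le_max lexx orbT Jk_ge0.
Qed.

Let Theta'_le : Theta' <= Num.max 0 (beta' + k t).
Proof.
apply: (sup_image_le (x := 0)); first by rewrite /I /= lexx t0.
move=> s st; set m := Num.min _ _.
have m_le1 : m <= Num.max (P s + k s) 0 by rewrite ge_min lexx.
have m_le2 : m <= Jk s by rewrite ge_min lexx orbT.
have JkJ := Jk_le_J_add st; have kst := k_le_kt st.
rewrite le_max; case: (leP (P s + k s) 0) => [Pk0|Pk0].
  by rewrite (le_trans m_le1) // max_r.
rewrite (max_l (ltW Pk0)) in m_le1; apply/orP; right.
have : m - k t <= Num.min (P s) (J s) by rewrite le_min; apply/andP; split; lra.
by have := le_beta' st; lra.
Qed.

Let D_near_inf e : 0 < e -> e < k t -> exists2 r, 0 <= r <= t & D r + k t < e.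
Proof.
move=> e0 ekt.
have [_ [r rt <-]] : exists2 x, [set Num.min (D s) 0 | s in [set s | 0 <= s <= t]] x
    & x < e - k t.
  apply: inf_lt; last by rewrite inf_D; lra.
  by exists (Num.min (D 0) 0), 0 => //=; rewrite lexx t0.
by rewrite gt_min => /orP[Dr|]; [exists r => //; lra | lra].
Qed.

Let beta'_le : beta' + k t <= Theta'.
Proof.
rewrite -lerBrDr; apply: (sup_image_le (x := 0)); first by rewrite /I /= lexx t0.
move=> s st; have /andP[s0 s_le_t] := st; have sst : s <= s <= t by rewrite lexx.
apply/ler_addgt0Pr => e e0.
have mP : Num.min (P s) (J s) <= P s by rewrite ge_min lexx.
have mJ : Num.min (P s) (J s) <= J s by rewrite ge_min lexx orbT.
have := Theta'_ge0; have := k_le_kt st.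
case: (leP (k t - e) (k s)) => kse.
  have : Num.min (P s) (J s) + k s <= Num.min (Num.max (P s + k s) 0) (Jk s).
    rewrite le_min le_max lerD2r mP /=.
    by apply: le_trans (J_add_le_Jk s0 sst); rewrite lerD2r.
  by have := le_Theta' st; lra.
have [r rt Dr] : exists2 r, 0 <= r <= t & D r + k t < e.
  apply: D_near_inf e0 _; rewrite -subr_gt0 (le_lt_trans _ kse) //.
  by apply: le_trans k0 _; apply: k_mono; rewrite lexx.
have /andP[r0 r_le_t] := rt.
have krt : k t - e < k r by have := Dk_ge0 rt; lra.
have srt : s <= r <= t.
  rewrite r_le_t andbT leNgt; apply/negP => rs.
  have : k r <= k s by apply: k_mono; rewrite r0 ltW.
  lra.
have JQ := J_le s0 srt; rewrite /Q in JQ.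
case: (leP (E r) (D r)) => EDr.
  by rewrite max_l // in JQ; lra.
have : J s + k r <= Num.min (Num.max (P r + k r) 0) (Jk r).
  rewrite le_min J_add_le_Jk // andbT le_max lerD2r.
  by rewrite (le_trans JQ) // (max_r (ltW EDr)) E_le_P.
by have := le_Theta' rt; lra.
Qed.

Lemma sup_inf_shift : Theta' = Num.max 0 (beta' + k t).
Proof. by apply/eqP; rewrite eq_le Theta'_le ge_max Theta'_ge0 beta'_le. Qed.

End sup_inf_shift.

Definition gap (R : realType) (l f : R -> R) (r : R) : R :=
  Num.min (f r - l r) (rlim f r - rlim l r).

Section skorokhod.
Variables (R : realType) (y l xi kappa : R -> R).
Hypothesis y_rlim : forall r, 0 <= r -> cvg (y x @[x --> r^'+]).
Hypothesis l_rlim : forall r, 0 <= r -> cvg (l x @[x --> r^'+]).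
Hypothesis xiE : forall r, 0 <= r -> xi r = y r + kappa r.
Hypothesis l_le_xi : forall r, 0 <= r -> l r <= xi r.
Hypothesis kappa_mono : forall s r, 0 <= s <= r -> kappa s <= kappa r.
Hypothesis kappa_rc : forall r, 0 <= r -> kappa x @[x --> r^'+] --> kappa r.
Hypothesis kappa0 : kappa 0 = 0.

Lemma xi_cvg_right r : 0 <= r -> xi x @[x --> r^'+] --> rlim y r + kappa r.
Proof.
move=> r0; have : (y \+ kappa) x @[x --> r^'+] --> rlim y r + kappa r.
  by apply: cvgD; [exact: y_rlim | exact: kappa_rc].
apply: cvg_trans; apply: near_eq_cvg; near=> x; rewrite xiE //.
by apply: (le_trans r0); apply: ltW; near: x; exact: nbhs_right_gt.
Unshelve. all: by end_near.
Qed.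

Lemma rlim_xi r : 0 <= r -> rlim xi r = rlim y r + kappa r.
Proof. by move=> r0; apply: cvg_lim => //; exact: xi_cvg_right. Qed.

Lemma gap_xi r : 0 <= r -> gap l xi r = gap l y r + kappa r.
Proof.
by move=> r0; rewrite /gap rlim_xi // xiE // addr_minl; congr Num.min; ring.
Qed.

Lemma gap_xi_ge0 r : 0 <= r -> 0 <= gap l xi r.
Proof.
move=> r0; rewrite le_min !subr_ge0 l_le_xi //=.
apply: ler_lim; [exact: l_rlim | by apply/cvg_ex; eexists; exact: xi_cvg_right |].
near=> x; apply: l_le_xi; apply: (le_trans r0); apply: ltW.
by near: x; exact: nbhs_right_gt.
Unshelve. all: by end_near.
Qed.

Variable t : R.
Hypothesis t0 : 0 <= t.

Lemma kappa_ge0 r : 0 <= r -> 0 <= kappa r.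
Proof. by move=> r0; rewrite -kappa0 kappa_mono // lexx. Qed.

Lemma min_gap_ge_Nkappa s : 0 <= s <= t -> - kappa t <= Num.min (gap l y s) 0.
Proof.
move=> /andP[s0 st]; have := gap_xi_ge0 s0; rewrite gap_xi // => gk.
have ks : kappa s <= kappa t by apply: kappa_mono; rewrite s0 st.
by have := kappa_ge0 t0; rewrite le_min => kt0; apply/andP; split; lra.
Qed.

Lemma alpha_le_min_gap s : 0 <= s <= t -> alpha l y t <= Num.min (gap l y s) 0.
Proof.
move=> st; apply: ge_inf; last by exists s.
by exists (- kappa t) => _ [r rt <-]; exact: min_gap_ge_Nkappa.
Qed.

Lemma alpha_ge_Nkappa : - kappa t <= alpha l y t.
Proof.
apply: lb_le_inf; first by exists (Num.min (gap l y 0) 0), 0 => //=; rewrite lexx.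
by move=> _ [s st <-]; exact: min_gap_ge_Nkappa.
Qed.

Lemma alpha_le0 : alpha l y t <= 0.
Proof.
have t00 : 0 <= (0 : R) <= t by rewrite lexx t0.
by have := alpha_le_min_gap t00; rewrite le_min => /andP[].
Qed.

Variable k : cumulative R R.
Hypothesis kE : forall x, k x = ext0 kappa x.
Hypothesis gap_int0 :
  (\int[lebesgue_stieltjes_measure k]_(s in [set s : R | (0 <= s)%R])
     (gap l xi s)%:E = 0)%E.

Lemma kappa_le_Nalpha : kappa t <= - alpha l y t.
Proof.
set c := - alpha l y t; have c0 : 0 <= c by rewrite oppr_ge0 alpha_le0.
rewrite leNgt; apply/negP => ckt.
set e := (kappa t - c) / 2; have e0 : 0 < e by rewrite divr_gt0 // subr_gt0.
have vkt : c + e <= kappa t by rewrite /e; lra.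
have [a [/andP[a0 a_le_t] v_le_ka kltv]] := first_passage t0 kappa_mono kappa_rc vkt.
pose A : set (measurableTypeR R) := `[a, t]%classic.
have muA : (e%:E <= lebesgue_stieltjes_measure k A)%E.
  have kbv b : b < a -> k b <= c + e.
    rewrite kE /ext0; case: ifPn => [_ _|]; first by rewrite kappa0; lra.
    by rewrite -leNgt => b0 /(kltv _ b0)/ltW.
  have := lebesgue_stieltjes_measure_itvcc_ge a_le_t kbv.
  by rewrite kE /ext0 ltNge t0 /= (_ : kappa t - (c + e) = e) // /e; field.
have : (e%:E * lebesgue_stieltjes_measure k A <= 0)%E.
  rewrite -gap_int0; apply: integral_ge_mul_measure.
  - exact: measurable_itv.
  - by move=> x; rewrite /A /= in_itv /= => /andP[ax _]; exact: le_trans ax.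
  - exact: ltW.
  - by move=> x x0; exact: gap_xi_ge0.
  - move=> x; rewrite /A /= in_itv /= => /andP[ax xt]; have x0 := le_trans a0 ax.
    have := alpha_le_min_gap (introT andP (conj x0 xt)); rewrite le_min => /andP[gx _].
    have : kappa a <= kappa x by apply: kappa_mono; rewrite a0 ax.
    by move: v_le_ka gx; rewrite gap_xi // /c; lra.
rewrite leNgt mule_gt0 // (lt_le_trans _ muA) // lte_fin.
Qed.

Lemma alpha_eq_Nkappa : alpha l y t = - kappa t.
Proof. by apply/eqP; rewrite eq_le alpha_ge_Nkappa andbT lerNr kappa_le_Nalpha. Qed.

Variable u : R -> R.

Lemma inner_inf_xi s : 0 <= s -> inner_inf u l xi s t =
  inf [set Num.max (gap l y r) (y r - u r) + kappa r | r in [set r | s <= r <= t]].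
Proof.
move=> s0; congr inf; apply: eq_imagel => r /andP[sr _]; have r0 := le_trans s0 sr.
rewrite -[Num.min _ _]/(gap l xi r) gap_xi // xiE // addr_maxl.
by congr Num.max; ring.
Qed.

Lemma Theta_xi : Theta u l xi t =
  sup [set Num.min (Num.max (Num.max (y s - u s) (rlim y s - rlim u s) + kappa s) 0)
        (inf [set Num.max (gap l y r) (y r - u r) + kappa r | r in [set r | s <= r <= t]])
      | s in [set s | 0 <= s <= t]].
Proof.
congr sup; apply: eq_imagel => s /andP[s0 _].
rewrite inner_inf_xi // rlim_xi // xiE // addr_maxl.
by congr (Num.min (Num.max (Num.max _ _) 0) _); ring.
Qed.

Hypothesis l_le_u : forall r, 0 <= r -> l r <= u r.
Variable M : R.
Hypothesis yl_le : forall r, 0 <= r <= t -> y r - l r <= M.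

Lemma max_alpha_beta :
  Num.max (alpha l y t) (beta u l y t) = alpha l y t + Theta u l xi t.
Proof.
have Q_le r : 0 <= r <= t -> Num.max (gap l y r) (y r - u r) <= M.
  move=> rt; have /andP[r0 _] := rt; rewrite ge_max; apply/andP; split.
    by rewrite (le_trans _ (yl_le rt)) // ge_min lexx.
  by rewrite (le_trans _ (yl_le rt)) // lerD2l lerN2 l_le_u.
have Dk_ge0 r : 0 <= r <= t -> 0 <= gap l y r + kappa r.
  by move=> /andP[r0 _]; rewrite -gap_xi //; exact: gap_xi_ge0.
have E_le_P r : 0 <= r <= t -> y r - u r <= Num.max (y r - u r) (rlim y r - rlim u r).
  by rewrite le_max lexx.
have k0 : 0 <= kappa 0 by rewrite kappa0.
rewrite Theta_xi (sup_inf_shift t0 kappa_mono k0 Dk_ge0 alpha_eq_Nkappa E_le_P Q_le).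
by rewrite alpha_eq_Nkappa addr_maxr addr0 addrCA addNr addr0.
Qed.

End skorokhod.

Theorem lemma3 (R : realType) (y l u xi kappa : R -> R) :
  regulated y -> regulated l -> regulated u ->
  (forall t, 0 <= t -> l t <= u t) ->
  l 0 <= y 0 -> y 0 <= u 0 ->
  RP_sol l y xi kappa ->
  forall t, 0 <= t ->
    Num.max (alpha l y t) (beta u l y t) = alpha l y t + Theta u l xi t.
Proof.
move=> yreg lreg _ l_le_u _ _ [xiE [l_le_xi [kmono [krc [k0 [k [kE int0]]]]]]] t t0.
have [My yM] := regulated_bounded t yreg; have [Ml lM] := regulated_bounded t lreg.
apply: (max_alpha_beta (proj2 yreg) (proj2 lreg) xiE l_le_xi kmono krc k0 t0 kE int0 l_le_u
  (M := My + Ml)) => r rt.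
by have := yM r rt; have := lM r rt; rewrite !ler_norml => /andP[? ?] /andP[? ?]; lra.
Qed.
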